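(* Let $C\subset Ob(CC(R,LM))$ be closed under $ft$ and $\le$ a transitive relation on $C$ such that $\Gamma\le\Gamma'$ implies $l(\Gamma)=l(\Gamma')$, and such that for $\Gamma,F\in C$ with $ft(\Gamma)\le F$ one has $\sigma(\Gamma,F)\in C$ and $\Gamma\le\sigma(\Gamma,F)$. Then: (1) if $(\Gamma,T),(\Gamma,T')\in C$, $(\Gamma,T)\le(\Gamma,T')$ and $\Gamma\le\Gamma'$, then $(\Gamma,T)\le(\Gamma',T')$; (2) if moreover $\le$ is symmetric and $ft$-monotone (i.e. $\Gamma\le\Gamma'$ implies $ft(\Gamma)\le ft(\Gamma')$), then $(\Gamma,T)\le(\Gamma',T')$ implies $(\Gamma,T)\le(\Gamma,T')$.
   Context: $[n]=\{1,\dots,n\}$; $R$ is a monad on Sets and $LM$ a left $R$-module with values in Sets. $Ob(CC(R,LM))$ is the set of finite sequences $(T_1,\dots,T_n)$ with $T_j\in LM([j-1])$; $l$ is length; $ft$ drops the last entry ($ft()=()$); $(\Gamma,T)$ denotes the sequence $\Gamma$ extended by $T$. For $\Gamma=(T_1,\dots,T_{n+k})$, $k>0$, and $\Gamma'=(T'_1,\dots,T'_n)$: $\sigma(\Gamma,\Gamma')=(T'_1,\dots,T'_n,T_{n+1},\dots,T_{n+k})$. *)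

From mathcomp Require Import all_boot.
Set Implicit Arguments. Unset Strict Implicit. Unset Printing Implicit Defensive.

Record monad := Monad {
  mon :> Type -> Type;
  ret : forall X, X -> mon X;
  bind : forall X Y, mon X -> (X -> mon Y) -> mon Y;
  bind_retl : forall X Y (x : X) (f : X -> mon Y), bind (ret x) f = f x;
  bind_retr : forall X (m : mon X), bind m (@ret X) = m;
  bind_assoc : forall X Y Z (m : mon X) (f : X -> mon Y) (g : Y -> mon Z),
      bind (bind m f) g = bind m (fun x => bind (f x) g) }.

Record lmodule (R : monad) := LModule {
  lmod :> Type -> Type;
  lbind : forall X Y, lmod X -> (X -> R Y) -> lmod Y;
  lbind_ret : forall X (t : lmod X), lbind t (@ret R X) = t;
  lbind_assoc : forall X Y Z (t : lmod X) (f : X -> R Y) (g : Y -> R Z),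
      lbind (lbind t f) g = lbind t (fun x => bind (f x) g) }.

Section CC.
Variables (R : monad) (LM : lmodule R).

(* [n] = {1..n} is represented by the n-element type 'I_n. *)
Definition entry := {j : nat & LM 'I_j}.

(* (T_1,...,T_n) is an object iff T_j lies in LM([j-1]),
   i.e. the j-th entry (0-based index i = j-1) has tag i. *)
Fixpoint wf_from (i : nat) (s : seq entry) : Prop :=
  match s with
  | [::] => True
  | x :: s' => projT1 x = i /\ wf_from i.+1 s'
  end.

Definition isOb (s : seq entry) : Prop := wf_from 0 s.

Definition l (s : seq entry) : nat := size s.

(* ft drops the last entry; ft () = () *)
Definition ft (s : seq entry) : seq entry := take (size s).-1 s.

Definition ext (G : seq entry) (T : LM 'I_(size G)) : seq entry :=
  rcons G (existT _ (size G) T).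

(* sigma(Gamma, Gamma') for l(Gamma') < l(Gamma); junk (= Gamma) otherwise *)
Definition sigma (G F : seq entry) : seq entry :=
  if size F < size G then F ++ drop (size F) G else G.

End CC.

From mathcomp Require Import all_boot.
Set Implicit Arguments. Unset Strict Implicit. Unset Printing Implicit Defensive.

(* Substituting an equally long context F for the prefix of (G, x) gives (F, x), so
   the hypothesis on sigma moves an object along a relation between its prefixes:
   for (1) apply it to (Gamma, T') and Gamma'; for (2) ft-monotonicity and symmetry
   give Gamma' <= Gamma, and it is applied to (Gamma', T') and Gamma. *)

Lemma ft_rcons (R : monad) (LM : lmodule R) (G : seq (entry LM)) x :
  ft (rcons G x) = G.
Proof. by rewrite /ft size_rcons -cats1 take_size_cat. Qed.

Lemma sigma_rcons (R : monad) (LM : lmodule R) (G F : seq (entry LM)) x :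
  size F = size G -> sigma (rcons G x) F = rcons F x.
Proof.
by move=> eqFG; rewrite /sigma size_rcons eqFG ltnSn -cats1 drop_size_cat // cats1.
Qed.

Section Substitution.
Variables (R : monad) (LM : lmodule R).
Variables (C : seq (entry LM) -> Prop) (le : seq (entry LM) -> seq (entry LM) -> Prop).
Hypothesis leC : forall G G', le G G' -> C G /\ C G'.
Hypothesis le_trans : forall G1 G2 G3, le G1 G2 -> le G2 G3 -> le G1 G3.
Hypothesis le_size : forall G G', le G G' -> l G = l G'.
Hypothesis le_sigma : forall G F, C G -> C F -> le (ft G) F ->
  C (sigma G F) /\ le G (sigma G F).

Lemma le_rcons_prefix (G F : seq (entry LM)) x :
  C (rcons G x) -> le G F -> le (rcons G x) (rcons F x).
Proof.
move=> CGx leGF; have [_ CF] := leC leGF.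
have leftF : le (ft (rcons G x)) F by rewrite ft_rcons.
have [_] := le_sigma CGx CF leftF.
by rewrite sigma_rcons //; have := le_size leGF.
Qed.

Lemma le_ext_prefix (G G' : seq (entry LM)) (T T' : LM 'I_(size G)) :
  C (ext T') -> le (ext T) (ext T') -> le G G' ->
  le (ext T) (rcons G' (existT _ (size G) T')).
Proof. by move=> CT' leTT' leGG'; apply: le_trans leTT' (le_rcons_prefix CT' leGG'). Qed.

Hypothesis le_sym : forall G G', le G G' -> le G' G.
Hypothesis le_ft : forall G G', le G G' -> le (ft G) (ft G').

Lemma le_ext_last (G G' : seq (entry LM)) (T T' : LM 'I_(size G)) :
  le (ext T) (rcons G' (existT _ (size G) T')) -> le (ext T) (ext T').
Proof.
move=> leTT'; have leGG' : le G G' by have := le_ft leTT'; rewrite /ext !ft_rcons.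
have [_ CT'] := leC leTT'.
exact: le_trans leTT' (le_rcons_prefix CT' (le_sym leGG')).
Qed.

End Substitution.

Theorem lemma6p8 (R : monad) (LM : lmodule R)
  (C : seq (entry LM) -> Prop) (le : seq (entry LM) -> seq (entry LM) -> Prop)
  (HCob : forall G, C G -> isOb G)
  (HCft : forall G, C G -> C (ft G))
  (HleC : forall G G', le G G' -> C G /\ C G')
  (Htrans : forall G1 G2 G3, le G1 G2 -> le G2 G3 -> le G1 G3)
  (Hlen : forall G G', le G G' -> l G = l G')
  (Hsig : forall G F, C G -> C F -> le (ft G) F ->
            C (sigma G F) /\ le G (sigma G F)) :
  (forall (G G' : seq (entry LM)) (T : LM 'I_(size G)) (T' : LM 'I_(size G)),
      C (ext T) -> C (ext T') -> le (ext T) (ext T') -> le G G' ->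
      le (ext T) (rcons G' (existT _ (size G) T')))
  /\
  ((forall G G', le G G' -> le G' G) ->
   (forall G G', le G G' -> le (ft G) (ft G')) ->
   forall (G G' : seq (entry LM)) (T : LM 'I_(size G)) (T' : LM 'I_(size G)),
      le (ext T) (rcons G' (existT _ (size G) T')) ->
      le (ext T) (ext T')).
Proof.
split=> [G G' T T' _ |Hsym Hftm G G' T T'].
  exact: (le_ext_prefix HleC Htrans Hlen Hsig).
exact: (le_ext_last HleC Htrans Hlen Hsig Hsym Hftm).
Qed.
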